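(* Let $w$ be a word and let $v_x, v_y$ be vertices of the graph $G(w)$ with $\mathrm{dist}(v_x, v_y) = d$ in $G(w)$. Then $|\pi_{\{x\}}(w)| - d \le |\pi_{\{y\}}(w)| \le |\pi_{\{x\}}(w)| + d$.
   Context: For a set of symbols $\mathcal S$, $\pi_{\mathcal S}(w)$ is the subsequence of $w$ consisting of all occurrences of symbols in $\mathcal S$; $|\pi_{\{x\}}(w)|$ is the number of occurrences of $x$ in $w$. Symbols $x,y$ alternate in $w$ if $\pi_{\{x,y\}}(w) \in \{(xy)^k, (xy)^kx, (yx)^k, (yx)^ky : k \ge 0\}$. $G(w)$ has one vertex $v_a$ per symbol $a$ of the alphabet and undirected edge $(v_x,v_y)$ iff $x \neq y$ alternate in $w$; $\mathrm{dist}$ is the shortest-path distance in $G(w)$. *)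

From mathcomp Require Import all_boot.
Set Implicit Arguments. Unset Strict Implicit. Unset Printing Implicit Defensive.

Definition proj (A : eqType) (S : pred A) (w : seq A) : seq A := [seq c <- w | S c].

Definition occ (A : eqType) (x : A) (w : seq A) : nat := size (proj (pred1 x) w).

Definition alternate (A : eqType) (x y : A) (w : seq A) : Prop :=
  let s := proj (fun c => (c == x) || (c == y)) w in
  exists k : nat,
    s = flatten (nseq k [:: x; y]) \/
    s = rcons (flatten (nseq k [:: x; y])) x \/
    s = flatten (nseq k [:: y; x]) \/
    s = rcons (flatten (nseq k [:: y; x])) y.

Definition edgeG (A : eqType) (w : seq A) (x y : A) : Prop :=
  x <> y /\ alternate x y w.

(* walk E x p z : x :: p is a walk in E ending at z (length = size p). *)
Fixpoint walk (A : Type) (E : A -> A -> Prop) (x : A) (p : seq A) (z : A) : Prop :=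
  match p with
  | [::] => x = z
  | y :: p' => E x y /\ walk E y p' z
  end.

Definition distG (A : eqType) (w : seq A) (x y : A) (d : nat) : Prop :=
  (exists p : seq A, size p = d /\ walk (edgeG w) x p y) /\
  (forall p : seq A, walk (edgeG w) x p y -> d <= size p).

From mathcomp Require Import all_boot zify.

(* Along an edge of G(w) the occurrence counts differ by at most one, since an
   alternating projection such as (xy)^k x contains x and y almost equally
   often; summing along a path of length d gives the bound. *)

Lemma count_flatten_nseq (T : Type) (a : pred T) (s : seq T) (k : nat) :
  count a (flatten (nseq k s)) = k * count a s.
Proof. by elim: k => //= k IHk; rewrite count_cat IHk mulSn. Qed.

Lemma occ_proj (A : eqType) (S : pred A) (z : A) (w : seq A) :
  S z -> occ z w = count_mem z (proj S w).
Proof.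
move=> Sz; rewrite /occ /proj size_filter count_filter.
by apply: eq_count => c /=; case: eqP => // ->; rewrite Sz.
Qed.

Lemma alternate_sym (A : eqType) (x y : A) (w : seq A) :
  alternate x y w -> alternate y x w.
Proof.
have sym_proj : proj (fun c => (c == y) || (c == x)) w =
                proj (fun c => (c == x) || (c == y)) w.
  by apply: eq_filter => c; apply: orbC.
rewrite /alternate sym_proj => -[k alt]; exists k.
by case: alt => [|[|[|]]] ->; tauto.
Qed.

Lemma alternate_occ_le (A : eqType) (x y : A) (w : seq A) :
  alternate x y w -> occ y w <= (occ x w).+1.
Proof.
case=> k alt; have [<-|nxy] := eqVneq x y; first exact: leqnSn.
rewrite !(@occ_proj _ (fun c => (c == x) || (c == y))) ?eqxx ?orbT //.
have nyx : (y == x) = false by rewrite eq_sym (negbTE nxy).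
case: alt => [|[|[|]]] ->;
  rewrite -?cats1 ?count_cat !count_flatten_nseq /= (negbTE nxy) nyx;
  by rewrite !eqxx /= !(addn0, add0n, muln1); lia.
Qed.

Lemma edgeG_occ (A : eqType) (w : seq A) (x y : A) :
  edgeG w x y -> occ y w <= (occ x w).+1 /\ occ x w <= (occ y w).+1.
Proof.
by case=> _ alt; split; apply: alternate_occ_le => //; apply: alternate_sym.
Qed.

Lemma walk_lipschitz {T : Type} {E : T -> T -> Prop} {f : T -> nat} :
  (forall u v, E u v -> f v <= (f u).+1 /\ f u <= (f v).+1) ->
  forall x p y, walk E x p y -> f y <= f x + size p /\ f x <= f y + size p.
Proof.
move=> f_lip x p; elim: p x => [|z p IHp] x y /=; first by move=> ->; rewrite addn0.
case=> /f_lip [le_zx le_xz] /IHp [le_yz le_zy] /=; rewrite !addnS -!addSn; split.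
- by rewrite (leq_trans le_yz) ?leq_add2r.
- by rewrite (leq_trans le_xz) ?leq_add2r.
Qed.

Theorem lemma6 (A : eqType) (w : seq A) (x y : A) (d : nat) :
  distG w x y d ->
  occ x w - d <= occ y w <= occ x w + d.
Proof.
case=> [[p [<- walk_xy]] _].
have [le_yx le_xy] := walk_lipschitz (@edgeG_occ _ w) _ _ _ walk_xy.
by rewrite leq_subLR addnC le_xy le_yx.
Qed.
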